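(* Let $T=T_5$ be the symplectic quandle on $(\mathbb{Z}_5)^2$ defined below. For every $45$-tuple $f_1=(x_1,\dots,x_{45})\in T^{45}$ satisfying the relations $R_1,\dots,R_{45}$, there exists an $85$-tuple $f_2=(y_1,\dots,y_{85})\in T^{85}$ satisfying the relations $S_1,\dots,S_{85}$ such that $\{y_1,\dots,y_{85}\}=\{x_1,\dots,x_{45}\}$ as subsets of $T$ (i.e. $f_1$ and $f_2$ have the same image).
   Context: $T_5$ denotes the set $(\mathbb{Z}_5)^2$ of row vectors with the binary operation $x\triangleright y = x + \langle x,y\rangle\, y$, where $\langle x,y\rangle = xAy^{T}=x_{(1)}y_{(2)}-x_{(2)}y_{(1)}\in\mathbb{Z}_5$ with $A=\begin{pmatrix}0&1\\-1&0\end{pmatrix}$ (the symplectic quandle). A relation ''$x_a = x_b\triangleright x_c$'' means the vector equation $x_a = x_b + \langle x_b,x_c\rangle x_c$. The relations $R_1,\dots,R_{45}$ (crossing relations of the fundamental quandle of the first Allen–Swenberg link $L_1$, in variables $x_1,\dots,x_{45}$) are: $R_1: x_2=x_1\triangleright x_{26}$; $R_2: x_{26}=x_{27}\triangleright x_1$; $R_3: x_1=x_2\triangleright x_3$; $R_4: x_3=x_4\triangleright x_1$; $R_5: x_4=x_5\triangleright x_3$; $R_6: x_5=x_6\triangleright x_7$; $R_7: x_8=x_7\triangleright x_6$; $R_8: x_{29}=x_{28}\triangleright x_6$; $R_9: x_3=x_6\triangleright x_{28}$; $R_{10}: x_9=x_8\triangleright x_7$; $R_{11}: x_7=x_{10}\triangleright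 x_9$; $R_{12}: x_{11}=x_9\triangleright x_{10}$; $R_{13}: x_{10}=x_{11}\triangleright x_{12}$; $R_{14}: x_{13}=x_2\triangleright x_4$; $R_{15}: x_{12}=x_{14}\triangleright x_{13}$; $R_{16}: x_{19}=x_{15}\triangleright x_{14}$; $R_{17}: x_{22}=x_{15}\triangleright x_{13}$; $R_{18}: x_{20}=x_{16}\triangleright x_{14}$; $R_{19}: x_{21}=x_{16}\triangleright x_{13}$; $R_{20}: x_{14}=x_{17}\triangleright x_{21}$; $R_{21}: x_{13}=x_{18}\triangleright x_{21}$; $R_{22}: x_{20}=x_{17}\triangleright x_{22}$; $R_{23}: x_{19}=x_{18}\triangleright x_{22}$; $R_{24}: x_{21}=x_{23}\triangleright x_{20}$; $R_{25}: x_{22}=x_{24}\triangleright x_{20}$; $R_{26}: x_{26}=x_{23}\triangleright x_{19}$; $R_{27}: x_{25}=x_{24}\triangleright x_{19}$; $R_{28}: x_{30}=x_{28}\triangleright x_{29}$; $R_{29}: x_{29}=x_{31}\triangleright x_{30}$; $R_{30}: x_{32}=x_{30}\triangleright x_{31}$; $R_{31}: x_{31}=x_{33}\triangleright x_{32}$; $R_{32}: x_{34}=x_{32}\triangleright x_{33}$; $R_{33}: x_{33}=x_{35}\triangleright x_{34}$; $R_{34}: x_{40}=x_{36}\triangleright x_{35}$; $R_{35}: x_{38}=x_{36}\triangleright x_{34}$; $R_{36}: x_{41}=x_{37}\triangleright x_{35}$; $R_{37}: x_{39}=x_{37}\triangleright x_{34}$; $R_{38}: x_{35}=x_{42}\triangleright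 x_{39}$; $R_{39}: x_{34}=x_{43}\triangleright x_{39}$; $R_{40}: x_{41}=x_{42}\triangleright x_{38}$; $R_{41}: x_{40}=x_{43}\triangleright x_{38}$; $R_{42}: x_{25}=x_{44}\triangleright x_{40}$; $R_{43}: x_{39}=x_{44}\triangleright x_{41}$; $R_{44}: x_{27}=x_{45}\triangleright x_{40}$; $R_{45}: x_{38}=x_{45}\triangleright x_{41}$. The relations $S_1,\dots,S_{85}$ (crossing relations of the fundamental quandle of the second Allen–Swenberg link $L_2$, in variables $y_1,\dots,y_{85}$) are: for $k\in\{1,\dots,45\}\setminus\{9,44\}$, $S_k$ is $R_k$ with every $x_i$ replaced by $y_i$; $S_9: y_{47}=y_6\triangleright y_{28}$; $S_{44}: y_{46}=y_{45}\triangleright y_{40}$; and $S_{46}: y_{47}=y_{67}\triangleright y_{48}$; $S_{47}: y_{49}=y_{48}\triangleright y_{67}$; $S_{48}: y_{69}=y_{68}\triangleright y_{67}$; $S_{49}: y_3=y_{67}\triangleright y_{68}$; $S_{50}: y_{50}=y_{49}\triangleright y_{48}$; $S_{51}: y_{48}=y_{51}\triangleright y_{50}$; $S_{52}: y_{52}=y_{50}\triangleright y_{51}$; $S_{53}: y_{51}=y_{53}\triangleright y_{52}$; $S_{54}: y_{54}=y_{52}\triangleright y_{53}$; $S_{55}: y_{53}=y_{55}\triangleright y_{54}$; $S_{56}: y_{58}=y_{56}\triangleright y_{55}$; $S_{57}: y_{61}=y_{56}\triangleright y_{54}$; $S_{58}: y_{59}=y_{57}\triangleright y_{55}$; $S_{59}: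 y_{60}=y_{57}\triangleright y_{54}$; $S_{60}: y_{55}=y_{62}\triangleright y_{60}$; $S_{61}: y_{54}=y_{63}\triangleright y_{60}$; $S_{62}: y_{59}=y_{62}\triangleright y_{61}$; $S_{63}: y_{58}=y_{63}\triangleright y_{61}$; $S_{64}: y_{46}=y_{64}\triangleright y_{58}$; $S_{65}: y_{60}=y_{64}\triangleright y_{59}$; $S_{66}: y_{66}=y_{65}\triangleright y_{58}$; $S_{67}: y_{61}=y_{65}\triangleright y_{59}$; $S_{68}: y_{70}=y_{68}\triangleright y_{69}$; $S_{69}: y_{69}=y_{71}\triangleright y_{70}$; $S_{70}: y_{72}=y_{70}\triangleright y_{71}$; $S_{71}: y_{71}=y_{73}\triangleright y_{72}$; $S_{72}: y_{74}=y_{72}\triangleright y_{73}$; $S_{73}: y_{73}=y_{75}\triangleright y_{74}$; $S_{74}: y_{78}=y_{76}\triangleright y_{75}$; $S_{75}: y_{81}=y_{76}\triangleright y_{74}$; $S_{76}: y_{79}=y_{77}\triangleright y_{75}$; $S_{77}: y_{80}=y_{77}\triangleright y_{74}$; $S_{78}: y_{75}=y_{82}\triangleright y_{80}$; $S_{79}: y_{74}=y_{83}\triangleright y_{80}$; $S_{80}: y_{79}=y_{82}\triangleright y_{81}$; $S_{81}: y_{78}=y_{83}\triangleright y_{81}$; $S_{82}: y_{66}=y_{84}\triangleright y_{78}$; $S_{83}: y_{80}=y_{84}\triangleright y_{79}$; $S_{84}: y_{27}=y_{85}\triangleright y_{78}$; $S_{85}: y_{81}=y_{85}\triangleright y_{79}$.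 *)

From HB Require Import structures.
From mathcomp Require Import all_boot all_order all_algebra.
Set Implicit Arguments. Unset Strict Implicit. Unset Printing Implicit Defensive.
Import GRing.Theory.
Local Open Scope ring_scope.

Definition T := 'rV['F_5]_2.

Definition Asymp : 'M['F_5]_2 :=
  \matrix_(i < 2, j < 2)
    (if (val i == 0%N) && (val j == 1%N) then 1
     else if (val i == 1%N) && (val j == 0%N) then -1 else 0).

Definition sform (x y : T) : 'F_5 := (x *m Asymp *m y^T) 0 0.

Definition qop (x y : T) : T := x + sform x y *: y.

(* 1-based access to a tuple: at s i = x_i *)
Definition at_ n (s : n.-tuple T) (i : nat) : T := nth 0 s i.-1.

Definition sat_rels n (rels : seq (nat * nat * nat)) (s : n.-tuple T) : Prop :=
  forall a b c, (a, b, c) \in rels -> at_ s a = qop (at_ s b) (at_ s c).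

Definition Rrels : seq (nat * nat * nat) :=
  [:: (2,1,26); (26,27,1); (1,2,3); (3,4,1); (4,5,3); (5,6,7); (8,7,6);
      (29,28,6); (3,6,28); (9,8,7); (7,10,9); (11,9,10); (10,11,12);
      (13,2,4); (12,14,13); (19,15,14); (22,15,13); (20,16,14); (21,16,13);
      (14,17,21); (13,18,21); (20,17,22); (19,18,22); (21,23,20);
      (22,24,20); (26,23,19); (25,24,19); (30,28,29); (29,31,30);
      (32,30,31); (31,33,32); (34,32,33); (33,35,34); (40,36,35);
      (38,36,34); (41,37,35); (39,37,34); (35,42,39); (34,43,39);
      (41,42,38); (40,43,38); (25,44,40); (39,44,41); (27,45,40);
      (38,45,41)]%N.

Definition Srels : seq (nat * nat * nat) :=
  [:: (2,1,26); (26,27,1); (1,2,3); (3,4,1); (4,5,3); (5,6,7); (8,7,6);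
      (29,28,6); (47,6,28); (9,8,7); (7,10,9); (11,9,10); (10,11,12);
      (13,2,4); (12,14,13); (19,15,14); (22,15,13); (20,16,14); (21,16,13);
      (14,17,21); (13,18,21); (20,17,22); (19,18,22); (21,23,20);
      (22,24,20); (26,23,19); (25,24,19); (30,28,29); (29,31,30);
      (32,30,31); (31,33,32); (34,32,33); (33,35,34); (40,36,35);
      (38,36,34); (41,37,35); (39,37,34); (35,42,39); (34,43,39);
      (41,42,38); (40,43,38); (25,44,40); (39,44,41); (46,45,40);
      (38,45,41);
      (47,67,48); (49,48,67); (69,68,67); (3,67,68); (50,49,48);
      (48,51,50); (52,50,51); (51,53,52); (54,52,53); (53,55,54);
      (58,56,55); (61,56,54); (59,57,55); (60,57,54); (55,62,60);
      (54,63,60); (59,62,61); (58,63,61); (46,64,58); (60,64,59);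
      (66,65,58); (61,65,59); (70,68,69); (69,71,70); (72,70,71);
      (71,73,72); (74,72,73); (73,75,74); (78,76,75); (81,76,74);
      (79,77,75); (80,77,74); (75,82,80); (74,83,80); (79,82,81);
      (78,83,81); (66,84,78); (80,84,79); (27,85,78); (81,85,79)]%N.

(* Every T_5-colouring of L1 is nearly trivial: arcs 3-6 share one colour, arcs 7-11
   another, all remaining arcs a third, and these three colours are pairwise dependent
   vectors, so each acts trivially on the others.  Giving the arcs of L2 the same three
   colours class by class (the two new arcs 47 and 67 join the class of arc 3) then
   satisfies every crossing relation of L2, and both colourings have the same image.

   The classification is a finite computation on the 25 elements of T_5, encoded as
   5 a + b.  The colourings of the twelve-crossing tangle R16-R27 (and of its copy
   R34-R45) are parametrised by its arcs 13-16; this gives its boundary relation and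
   shows that the tangle is monochromatic once its arcs 13 and 14 agree.  The remaining
   21 crossings, together with the two boundary relations, are then exhausted by a
   constraint-propagation search whose soundness is proved once and for all. *)

From mathcomp Require Import all_boot all_order all_algebra zify.
Set Implicit Arguments. Unset Strict Implicit. Unset Printing Implicit Defensive.

Section Search.

Variables (n : nat) (op op_inv : nat -> nat -> nat).
Hypothesis op_invK : forall u v, u < n -> v < n -> op_inv (op u v) v = u.

Inductive constraint :=
  | Crossing of nat & nat & nat
  | Pred of seq nat & pred (seq nat).

Definition scope (c : constraint) : seq nat :=
  match c with Crossing a b c => [:: a; b; c] | Pred s _ => s end.

Definition holds (f : nat -> nat) (c : constraint) : bool :=
  match c with
  | Crossing a b c => f a == op (f b) (f c)
  | Pred s P => P (map f s)
  end.

Definition assignment := seq (option nat).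

Definition known (r : assignment) (i : nat) : bool := isSome (nth None r i).

Definition value (r : assignment) (i : nat) : nat := odflt 0 (nth None r i).

Definition extends (f : nat -> nat) (r : assignment) : Prop :=
  forall i x, nth None r i = Some x -> f i = x.

Definition assign (r : assignment) (v t : nat) : assignment := set_nth None r v (Some t).

Definition unknowns (r : assignment) (c : constraint) : seq nat :=
  undup [seq i <- scope c | ~~ known r i].

Definition trial (r : assignment) (v t : nat) (i : nat) : nat :=
  if i == v then t else value r i.

Definition scan (r : assignment) (c : constraint) (v : nat) : seq nat :=
  [seq t <- iota 0 n | holds (trial r v t) c].

Definition candidates (r : assignment) (c : constraint) (v : nat) : seq nat :=
  if c is Crossing a b c' then
    if (v == a) && (v != b) && (v != c') then [:: op (value r b) (value r c')]
    else if (v == b) && (v != a) && (v != c') then [:: op_inv (value r a) (value r c')]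
    else scan r c v
  else scan r c v.

Inductive step := Contradiction | Branch of nat & seq nat | Unconstrained.

Definition examine (r : assignment) (c : constraint) : step :=
  match unknowns r c with
  | [::] => if holds (value r) c then Unconstrained else Contradiction
  | [:: v] => Branch v (candidates r c v)
  | _ => Unconstrained
  end.

Definition decisive (s : step) : bool :=
  match s with Contradiction | Branch _ [::] | Branch _ [:: _] => true | _ => false end.

(* A contradiction or a forced value anywhere is taken at once; otherwise the first
   constraint with a single unknown decides the variable to branch on. *)
Fixpoint pick (cs : seq constraint) (r : assignment) : step :=
  if cs is c :: cs' then
    let s := examine r c in
    if decisive s then s else
    match s, pick cs' r with
    | Unconstrained, s' => s'
    | _, s' => if decisive s' then s' else s
    end
  else Unconstrained.

(* Running out of [fuel] yields [false], so [true] certifies the whole search tree. *)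
Fixpoint search (cs : seq constraint) (order : seq nat) (goals : seq constraint)
    (fuel : nat) (r : assignment) : bool :=
  if fuel is fuel'.+1 then
    let split v l := all (fun t => search cs order goals fuel' (assign r v t)) l in
    match pick cs r with
    | Contradiction => true
    | Branch v l => split v l
    | Unconstrained =>
      if [seq i <- order | ~~ known r i] is v :: _ then split v (iota 0 n)
      else all (fun g => all (known r) (scope g) && holds (value r) g) goals
    end
  else false.

Lemma eq_in_holds f1 f2 c : {in scope c, f1 =1 f2} -> holds f1 c = holds f2 c.
Proof.
move=> /eq_in_map e; case: c e => [a b c|s P] /= e; last by rewrite e.
by case: e => -> -> ->.
Qed.

Variable f : nat -> nat.
Hypothesis f_lt : forall i, f i < n.

Definition admissible (s : step) : Prop :=
  match s with Contradiction => False | Branch v l => f v \in l | Unconstrained => True end.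

Lemma mem_unknowns r c i : (i \in unknowns r c) = (i \in scope c) && ~~ known r i.
Proof. by rewrite mem_undup mem_filter andbC. Qed.

Lemma extends_nil : extends f [::].
Proof. by move=> i x; rewrite nth_nil. Qed.

Lemma extends_assign r v : extends f r -> extends f (assign r v (f v)).
Proof. by move=> fr i x; rewrite nth_set_nth /=; case: eqP => [-> [] | _ /fr]. Qed.

Lemma value_known r i : extends f r -> known r i -> value r i = f i.
Proof. by rewrite /known /value => fr; case E: (nth None r i) => //=; rewrite (fr _ _ E). Qed.

Lemma holds_known r c :
  extends f r -> all (known r) (scope c) -> holds (value r) c = holds f c.
Proof. by move=> fr /allP sc; apply: eq_in_holds => i /sc; apply: value_known. Qed.

Lemma candidates_sound r c v :
  extends f r -> holds f c -> unknowns r c = [:: v] -> f v \in candidates r c v.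
Proof.
move=> fr fc uc.
have others i : i \in scope c -> i != v -> value r i = f i.
  move=> ic iv; apply: value_known => //; apply/negPn/negP => ukn.
  by have := mem_unknowns r c i; rewrite uc ic ukn inE (negbTE iv).
have scanP : f v \in scan r c v.
  rewrite mem_filter mem_iota leq0n add0n f_lt !andbT (eq_in_holds (f2 := f)) // => i ic.
  by rewrite /trial; case: eqP => [-> // | /eqP iv]; apply: others.
case: c uc fc others scanP => [a b c|s P] _ /= fc others scanP //; move/eqP: fc => fc.
have oth i : i \in [:: a; b; c] -> v != i -> value r i = f i by move=> ? ?; rewrite others // eq_sym.
case: ifP => [/andP[/andP[/eqP va vb] vc']|_].
  by rewrite (oth b) ?(oth c) ?inE ?eqxx ?orbT // va fc ?inE ?eqxx.
case: ifP => // /andP[/andP[/eqP vb va] vc'].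
by rewrite (oth a) ?(oth c) ?inE ?eqxx ?orbT // vb fc op_invK ?inE ?eqxx.
Qed.

Lemma examine_sound r c : extends f r -> holds f c -> admissible (examine r c).
Proof.
move=> fr fc; rewrite /examine; case uc: (unknowns r c) => [|v [|w l]] //=.
  suff /(holds_known fr) -> : all (known r) (scope c) by rewrite fc.
  apply/allP => i ic; apply/negPn/negP => ukn.
  by have := mem_unknowns r c i; rewrite uc ic ukn.
exact: candidates_sound.
Qed.

Lemma pick_sound cs r : extends f r -> all (holds f) cs -> admissible (pick cs r).
Proof.
move=> fr; elim: cs => //= c cs IH /andP[/(examine_sound fr) sc /IH sp].
by case: ifP => // _; case: (examine r c) sc => // *; case: ifP.
Qed.

Lemma search_sound cs order goals fuel r :
  all (holds f) cs -> extends f r -> search cs order goals fuel r -> all (holds f) goals.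
Proof.
move=> fcs; elim: fuel r => // fuel IH r fr /=.
have split_sound v l : f v \in l ->
    all (fun t => search cs order goals fuel (assign r v t)) l -> all (holds f) goals.
  by move=> fvl /allP/(_ _ fvl); apply: IH; apply: extends_assign.
have := pick_sound fr fcs; case: (pick cs r) => [|v l|] //= pk; first exact: split_sound.
case: [seq i <- order | ~~ known r i] => [|v _].
  by apply: sub_all => g /andP[kg]; rewrite holds_known.
by apply: split_sound; rewrite mem_iota leq0n add0n f_lt.
Qed.

End Search.

(* The code of [x |> y] for codes [u = 5 a + b], [v = 5 c + d]: here [k = <x,y>]. *)
Definition qop_code (u v : nat) : nat :=
  let a := u %/ 5 in let b := u %% 5 in let c := v %/ 5 in let d := v %% 5 in
  let k := (a * d + 4 * (b * c)) %% 5 in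
  5 * ((a + k * c) %% 5) + (b + k * d) %% 5.

Definition tabulate (F : nat -> nat -> nat) : seq (seq nat) :=
  mkseq (fun u => mkseq (F u) 25) 25.

Definition qopn_table : seq (seq nat) := Eval vm_compute in tabulate qop_code.

Definition qopn_inv_table : seq (seq nat) := Eval vm_compute in
  tabulate (fun u v => index u [seq qop_code w v | w <- iota 0 25]).

Definition qopn (u v : nat) : nat := nth 0 (nth [::] qopn_table u) v.

Definition qopn_inv (u v : nat) : nat := nth 0 (nth [::] qopn_inv_table u) v.

Lemma mem_iota25 u : u < 25 -> u \in iota 0 25.
Proof. by rewrite mem_iota. Qed.

Lemma qopnK u v : u < 25 -> v < 25 -> qopn_inv (qopn u v) v = u.
Proof.
have table_ok : all (fun u => all (fun v => qopn_inv (qopn u v) v == u) (iota 0 25)) (iota 0 25).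
  by vm_compute.
by move=> /mem_iota25 u25 /mem_iota25 v25; apply/eqP/(allP (allP table_ok u u25) v v25).
Qed.

Definition code (x : T) : nat := 5 * x 0%R ord0 + x 0%R ord_max.

Lemma F5_lt (a : 'F_5) : a < 5. Proof. exact: ltn_ord. Qed.

Lemma code_lt x : code x < 25.
Proof. by rewrite /code; have := F5_lt (x 0%R ord0); have := F5_lt (x 0%R ord_max); lia. Qed.

Lemma code_inj : injective code.
Proof.
move=> x y; rewrite /code => exy.
have := F5_lt (x 0%R ord0); have := F5_lt (x 0%R ord_max).
have := F5_lt (y 0%R ord0); have := F5_lt (y 0%R ord_max) => y1 y0 x1 x0.
have e0 : x 0%R ord0 = y 0%R ord0 by apply: ord_inj; lia.
have e1 : x 0%R ord_max = y 0%R ord_max by apply: ord_inj; lia.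
apply/rowP => -[[|[|//]] j2].
  by rewrite (_ : Ordinal j2 = ord0); [exact: e0 | exact: val_inj].
by rewrite (_ : Ordinal j2 = ord_max); [exact: e1 | exact: val_inj].
Qed.

Definition F5_elems : seq 'F_5 := [:: 0; 1; 2; 3; 4]%R.

Lemma mem_F5_elems (a : 'F_5) : a \in F5_elems.
Proof.
by case: a => [[|[|[|[|[|m]]]]] lt5] //; rewrite !inE; apply/orP;
  do ?[by left; apply/eqP/val_inj | right].
Qed.

Section CodeOperation.
Import GRing.Theory.
Local Open Scope ring_scope.

Lemma sformE (x y : T) : sform x y = x 0 ord0 * y 0 ord_max - x 0 ord_max * y 0 ord0.
Proof.
rewrite /sform !mxE !big_ord_recl !big_ord0 !mxE !big_ord_recl !big_ord0 /Asymp !mxE /=.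
rewrite (_ : lift ord0 ord0 = ord_max); last exact: val_inj.
by rewrite !mulr0 !mulr1 !addr0 !add0r mulrN1 mulNr addrC.
Qed.

Lemma code_qop x y : code (qop x y) = qopn (code x) (code y).
Proof.
have qopE j : qop x y 0 j = x 0 j + sform x y * y 0 j by rewrite /qop !mxE.
have: all (fun a : 'F_5 => all (fun b : 'F_5 => all (fun c : 'F_5 => all (fun d : 'F_5 =>
    let k := a * d - b * c in let u := a + k * c in let w := b + k * d in
    (5 * u + w)%N == qopn (5 * a + b)%N (5 * c + d)%N)
    F5_elems) F5_elems) F5_elems) F5_elems.
  by vm_compute.
move=> /allP/(_ _ (mem_F5_elems (x 0 ord0)))/allP/(_ _ (mem_F5_elems (x 0 ord_max))).
move=> /allP/(_ _ (mem_F5_elems (y 0 ord0)))/allP/(_ _ (mem_F5_elems (y 0 ord_max)))/eqP.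
by rewrite /code !qopE sformE.
Qed.

End CodeOperation.

Definition crossing_ok (h : nat -> nat) (r : nat * nat * nat) : bool :=
  h r.1.1 == qopn (h r.1.2) (h r.2).

Definition tangle_rels : seq (nat * nat * nat) := take 12 (drop 15 Rrels).

(* Crossings R16-R21 and R24-R27 determine arcs 17-26 from arcs 13-16; R22 and R23
   remain as the two consistency conditions. *)
Definition tangle_solve (p q s t : nat) : option (seq nat) :=
  let x19 := qopn s q in let x22 := qopn s p in
  let x20 := qopn t q in let x21 := qopn t p in
  let x17 := qopn_inv q x21 in let x18 := qopn_inv p x21 in
  let x23 := qopn_inv x21 x20 in let x24 := qopn_inv x22 x20 in
  if (x20 == qopn x17 x22) && (x19 == qopn x18 x22) then
    Some [:: p; q; s; t; x17; x18; x19; x20; x21; x22; x23; x24; qopn x24 x19; qopn x23 x19]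
  else None.

Lemma tangle_solveE h : (forall i, h i < 25) -> all (crossing_ok h) tangle_rels ->
  tangle_solve (h 13) (h 14) (h 15) (h 16) = Some (map h (iota 13 14)).
Proof.
move=> h_lt /=.
case/and4P=> /eqP e19 /eqP e22 /eqP e20 /and4P[/eqP e21 /eqP e14 /eqP e13].
case/and4P=> /eqP c20 /eqP c19 /eqP e21' /and4P[/eqP e22' /eqP e26 /eqP e25 _].
have e17 : h 17 = qopn_inv (h 14) (h 21) by rewrite e14 qopnK.
have e18 : h 18 = qopn_inv (h 13) (h 21) by rewrite e13 qopnK.
have e23 : h 23 = qopn_inv (h 21) (h 20) by rewrite e21' qopnK.
have e24 : h 24 = qopn_inv (h 22) (h 20) by rewrite e22' qopnK.
by rewrite /tangle_solve -e19 -e22 -e20 -e21 -e17 -e18 -e23 -e24 -e26 -e25 -c20 -c19 !eqxx.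
Qed.

Definition code_pairs : seq (nat * nat) := [seq (s, t) | s <- iota 0 25, t <- iota 0 25].

Definition tangle_boundaries (p q : nat) : seq (nat * nat) :=
  undup (pmap (fun st => omap (fun l => (nth 0 l 12, nth 0 l 13)) (tangle_solve p q st.1 st.2))
              code_pairs).

Definition tangle_table : seq (seq (seq (nat * nat))) :=
  mkseq (fun p => mkseq (tangle_boundaries p) 25) 25.

Definition tangle_boundary_ok (tab : seq (seq (seq (nat * nat)))) (s : seq nat) : bool :=
  if s is [:: p; q; x; y] then (x, y) \in nth [::] (nth [::] tab p) q else false.

Lemma tangle_boundary h : (forall i, h i < 25) -> all (crossing_ok h) tangle_rels ->
  tangle_boundary_ok tangle_table [:: h 13; h 14; h 25; h 26].
Proof.
move=> h_lt hA; rewrite /= !nth_mkseq // mem_undup mem_pmap.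
apply/mapP; exists (h 15, h 16); last by rewrite (tangle_solveE h_lt hA).
by rewrite allpairs_f ?mem_iota25.
Qed.

Lemma tangle_diagonal_trivial :
  all (fun p => all (fun x => if tangle_solve p p x.1 x.2 is Some l then all (pred1 p) l else true)
                    code_pairs) (iota 0 25).
Proof. by vm_compute. Qed.

Lemma tangle_trivial h : (forall i, h i < 25) -> all (crossing_ok h) tangle_rels ->
  h 13 = h 14 -> {in iota 13 14, forall i, h i = h 13}.
Proof.
move=> h_lt hA e; have /allP/(_ (h 15, h 16)) := allP tangle_diagonal_trivial _ (mem_iota25 (h_lt 13)).
rewrite allpairs_f ?mem_iota25 // => /(_ isT); rewrite /= {2}e (tangle_solveE h_lt hA) all_map.
by move=> /allP hi i /hi /eqP.
Qed.

Definition tangle'_rels : seq (nat * nat * nat) := drop 33 Rrels.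

Definition tangle'_arc (i : nat) : nat :=
  nth 0 [:: 34; 35; 36; 37; 42; 43; 40; 41; 39; 38; 44; 45; 27; 25] (i - 13).

Lemma perm_tangle'_rels :
  perm_eq tangle'_rels [seq (tangle'_arc r.1.1, tangle'_arc r.1.2, tangle'_arc r.2) | r <- tangle_rels].
Proof. by vm_compute. Qed.

Lemma tangle'_relsP h :
  all (crossing_ok h) tangle'_rels -> all (crossing_ok (h \o tangle'_arc)) tangle_rels.
Proof. by rewrite (eq_all_r (perm_mem perm_tangle'_rels)) all_map. Qed.

Definition core_rels : seq (nat * nat * nat) := take 15 Rrels ++ take 6 (drop 27 Rrels).

Definition arc_class (i : nat) : nat := if 3 <= i <= 6 then 1 else if 7 <= i <= 11 then 2 else 0.

Definition class_rep (k : nat) : nat := nth 1 [:: 1; 3; 7] k.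

Definition core_arcs : seq nat := iota 1 14 ++ iota 25 11.

Definition pairwise_commute (s : seq nat) : bool :=
  all (fun u => all (fun v => qopn u v == u) s) s.

Definition same_color (s : seq nat) : bool := nth 0 s 0 == nth 0 s 1.

Definition core_constraints (tab : seq (seq (seq (nat * nat)))) : seq constraint :=
  Pred [:: 13; 14; 25; 26] (tangle_boundary_ok tab) ::
  Pred [:: 34; 35; 27; 25] (tangle_boundary_ok tab) ::
  [seq Crossing r.1.1 r.1.2 r.2 | r <- core_rels].

Definition core_goals : seq constraint :=
  Pred [:: 1; 3; 7] pairwise_commute ::
  [seq Pred [:: i; class_rep (arc_class i)] same_color | i <- core_arcs].

(* Any branching order covering the core arcs is sound; this one keeps the tree small. *)
Definition core_order : seq nat :=
  [:: 3; 6; 34; 35; 1; 13; 7; 2; 4; 5; 8; 9; 10; 11; 12; 14; 25; 26; 27; 28; 29; 30; 31; 32; 33].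

Lemma core_search :
  search 25 qopn qopn_inv (core_constraints tangle_table) core_order core_goals 30 [::].
Proof. by vm_compute. Qed.

Lemma sub_crossings_ok g rels :
  {subset rels <= Rrels} -> all (crossing_ok g) Rrels -> all (crossing_ok g) rels.
Proof. by move=> sub /allP ok; apply/allP => r /sub /ok. Qed.

Lemma arcs_cover :
  all (fun i => (i \in core_arcs) || (class_rep (arc_class i) == 1) &&
                ((i \in iota 13 14) || (i \in map tangle'_arc (iota 13 14)))) (iota 1 45).
Proof. by vm_compute. Qed.

Lemma L1_code_classes g : (forall i, g i < 25) -> all (crossing_ok g) Rrels ->
  pairwise_commute [:: g 1; g 3; g 7] /\
  {in iota 1 45, forall i, g i = g (class_rep (arc_class i))}.
Proof.
move=> g_lt gR.
have gA : all (crossing_ok g) tangle_rels by apply: sub_crossings_ok gR => r /mem_take/mem_drop.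
have gB : all (crossing_ok (g \o tangle'_arc)) tangle_rels.
  by apply/tangle'_relsP/(sub_crossings_ok _ gR) => r; apply: mem_drop.
have gcore : all (holds qopn g) (core_constraints tangle_table).
  apply/and3P; split; [exact: tangle_boundary g_lt gA | exact: tangle_boundary (fun i => g_lt _) gB |].
  change (all (crossing_ok g) core_rels).
  by apply: sub_crossings_ok gR => r; rewrite mem_cat => /orP[] /mem_take // /mem_drop.
have /andP[comm] : pairwise_commute [:: g 1; g 3; g 7] &&
    all (holds qopn g) [seq Pred [:: i; class_rep (arc_class i)] same_color | i <- core_arcs].
  exact: (search_sound qopnK g_lt gcore (extends_nil g) core_search).
rewrite all_map => /allP same.
have core_class i : i \in core_arcs -> g i = g (class_rep (arc_class i)).
  by move=> /same /eqP.
split=> // i /(allP arcs_cover i)/orP[/core_class // | /andP[/eqP -> ]].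
have [g13 g14 g34 g35] : [/\ g 13 = g 1, g 14 = g 1, g 34 = g 1 & g 35 = g 1].
  by split; rewrite core_class.
case/orP=> [iA | /mapP[j jB ->]].
  by rewrite (tangle_trivial g_lt gA) ?g13 ?g14.
by rewrite (tangle_trivial (fun i => g_lt _) gB _ jB) /= ?g34 ?g35.
Qed.

Definition class_color (f1 : 45.-tuple T) (k : nat) : T := at_ f1 (class_rep k).

Lemma L1_coloring_classes (f1 : 45.-tuple T) : sat_rels Rrels f1 ->
  (forall k l, qop (class_color f1 k) (class_color f1 l) = class_color f1 k) /\
  {in iota 1 45, forall i, at_ f1 i = class_color f1 (arc_class i)}.
Proof.
move=> f1R; pose g i := code (at_ f1 i).
have gR : all (crossing_ok g) Rrels.
  by apply/allP => -[[a b] c] /f1R eabc; rewrite /crossing_ok /g /= eabc code_qop.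
have [comm classes] := L1_code_classes (fun i => code_lt _) gR.
split=> [k l | i /classes /code_inj //].
have rep_in m : code (class_color f1 m) \in [:: g 1; g 3; g 7].
  by rewrite /class_color /class_rep; case: m => [|[|[|m]]]; rewrite /= ?nth_nil !inE eqxx ?orbT.
by apply: code_inj; rewrite code_qop; apply/eqP/(allP (allP comm _ (rep_in k)) _ (rep_in l)).
Qed.

Definition arc_class2 (j : nat) : nat :=
  if j <= 45 then arc_class j else if j \in [:: 47; 67] then 1 else 0.

Lemma Srels_classes :
  all (fun r => [&& 0 < r.1.1 <= 85, 0 < r.1.2 <= 85, 0 < r.2 <= 85 &
                    arc_class2 r.1.1 == arc_class2 r.1.2]) Srels.
Proof. by vm_compute. Qed.

Lemma same_classes : map arc_class (iota 1 45) =i map arc_class2 (iota 1 85).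
Proof.
have classes : perm_eq (undup (map arc_class (iota 1 45))) (undup (map arc_class2 (iota 1 85))).
  by vm_compute.
by move=> k; rewrite -mem_undup (perm_mem classes) mem_undup.
Qed.

Lemma mem_Tuple n (U : eqType) (s : seq U) (sz : size s == n) : Tuple sz =i s.
Proof. by []. Qed.

Lemma L2_class_coloring (color : nat -> T) :
  (forall k l, qop (color k) (color l) = color k) ->
  exists f2 : 85.-tuple T, sat_rels Srels f2 /\ f2 =i map color (map arc_class2 (iota 1 85)).
Proof.
move=> comm; set s := map color (map arc_class2 (iota 1 85)).
have size_s : size s == 85 by rewrite !size_map size_iota.
exists (Tuple size_s); split=> [a b c | x]; last exact: mem_Tuple.
have sE j : 0 < j <= 85 -> at_ (Tuple size_s) j = color (arc_class2 j).
  case: j => // j /= j85; change (nth 0%R s j = color (arc_class2 j.+1)).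
  by rewrite (nth_map 0) ?size_map ?size_iota // (nth_map 0) ?size_iota ?nth_iota.
by move=> /(allP Srels_classes) /and4P[a85 b85 c85 /eqP eab]; rewrite !sE // eab comm.
Qed.

Theorem mainTheorem3 :
  forall f1 : 45.-tuple T, sat_rels Rrels f1 ->
  exists f2 : 85.-tuple T, sat_rels Srels f2 /\ [set x in f2] = [set x in f1].
Proof.
move=> f1 f1R; have [comm classes] := L1_coloring_classes f1R.
have [f2 [f2S f2E]] := L2_class_coloring comm.
have f1E : tval f1 = map (class_color f1) (map arc_class (iota 1 45)).
  apply: (@eq_from_nth _ 0%R) => [|i]; first by rewrite size_tuple !size_map size_iota.
  rewrite size_tuple => i45; rewrite !(nth_map 0) ?size_map ?size_iota // nth_iota // -classes.
    by rewrite /at_ add1n.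
  by rewrite mem_iota add1n ltnS.
exists f2; split=> //; apply/setP => x.
by rewrite !in_set f2E (_ : (x \in f1) = (x \in tval f1)) // f1E (eq_mem_map _ same_classes).
Qed.
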